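(* Let $(G,v)$ and $(G',v')$ be valued abelian groups and $f:G\to G'$ a map with $f0=0$. If $f$ is immediate, then for every $a'\in G'\setminus\{0\}$ there is $a\in G$ such that (IH1) $v'(a'-fa)>v'a'$, and (IH2) for all $b\in G$, $va\le vb$ implies $v'fa\le v'fb$. Conversely, if $f$ is a group homomorphism and for every $a'\in G'\setminus\{0\}$ there is $a\in G$ satisfying (IH1) and (IH2), then $f$ is immediate.
   Context: A valued abelian group $(G,v)$ is an abelian group with a map $v$ from $G$ onto $vG\cup\{\infty\}$, $vG$ totally ordered and $\infty$ larger than all its elements, such that $va=\infty$ iff $a=0$ and $v(a-b)\ge\min\{va,vb\}$. It is regarded as an ultrametric space with $u(a,b)=v(a-b)$. For a map $f:Y\to Y'$ of ultrametric spaces, with closed balls $B(x,y)=\{z:u(x,z)\ge u(x,y)\}$, an element $z'\in Y'$ is an attractor for $f$ if for every $y\in Y$ with $z'\neq fy$ there is $z\in Y$ with $u'(fz,z')>u'(fy,z')$ and $f(B(y,z))\subseteq B(fy,z')$; $f$ is immediate if every $z'\in Y'$ is an attractor for $f$. *)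

From HB Require Import structures.
From mathcomp Require Import all_boot all_order all_algebra.
Set Implicit Arguments. Unset Strict Implicit. Unset Printing Implicit Defensive.
Import Order.TTheory GRing.Theory.
Local Open Scope order_scope.

(* A valuation on an abelian group G with values in a totally ordered set
   with a top element \top playing the role of infinity:
   v a = \top  iff  a = 0,  and  v (a - b) >= min (v a) (v b). *)
Definition valuation (G : zmodType) (d : Order.disp_t) (Gam : tOrderType d)
  (v : G -> Gam) : Prop :=
  (forall a : G, v a = \top <-> a = 0%R) /\
  (forall a b : G, Order.min (v a) (v b) <= v (a - b)%R).

Definition vball (G : zmodType) (d : Order.disp_t) (Gam : tOrderType d)
  (v : G -> Gam) (x y : G) : G -> Prop :=
  fun z => v (x - y)%R <= v (x - z)%R.

Definition attractor (G G' : zmodType) (d d' : Order.disp_t)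
  (Gam : tOrderType d) (Gam' : tOrderType d')
  (v : G -> Gam) (v' : G' -> Gam') (f : G -> G') (z' : G') : Prop :=
  forall y : G, z' <> f y ->
    exists z : G, v' (f y - z')%R < v' (f z - z')%R /\
      (forall w : G, vball v y z w -> vball v' (f y) z' (f w)).

Definition immediate (G G' : zmodType) (d d' : Order.disp_t)
  (Gam : tOrderType d) (Gam' : tOrderType d')
  (v : G -> Gam) (v' : G' -> Gam') (f : G -> G') : Prop :=
  forall z' : G', attractor v v' f z'.

Definition IH_property (G G' : zmodType) (d d' : Order.disp_t)
  (Gam : tOrderType d) (Gam' : tOrderType d')
  (v : G -> Gam) (v' : G' -> Gam') (f : G -> G') : Prop :=
  forall a' : G', a' <> 0%R ->
    exists a : G, v' a' < v' (a' - f a)%R /\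
      (forall b : G, v a <= v b -> v' (f a) <= v' (f b)).

(* Both directions rest on one ultrametric fact: if [v (x - y) > v x] then
   [v y = v x].  For the forward direction, the attractor property at [a'],
   tested at [y = 0], yields the element [a]: [v'(a' - f a) > v' a'] forces
   [v'(f a) = v' a'], and the ball condition around [0] gives (IH2).  For the
   converse, given [z' <> f y] apply (IH1)/(IH2) to [a' := z' - f y] and take
   [z := y + a]; additivity reduces the ball condition around [y] to (IH2). *)
From mathcomp Require Import all_boot all_order all_algebra.
Import Order.TTheory GRing.Theory.
Local Open Scope order_scope.
Set Implicit Arguments.

Section Valuation.
Variables (G : zmodType) (d : Order.disp_t) (Gam : tOrderType d) (v : G -> Gam).
Hypothesis hv : valuation v.

Lemma valuation0 : v 0%R = \top.
Proof. by apply/hv.1. Qed.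

Lemma valuation_min_le_sub (a b : G) : Order.min (v a) (v b) <= v (a - b)%R.
Proof. exact: hv.2. Qed.

Lemma valuationN (x : G) : v (- x)%R = v x.
Proof.
suff le_vN y : v y <= v (- y)%R by apply/le_anti; rewrite le_vN -{2}(opprK x) le_vN.
have := valuation_min_le_sub 0%R y.
by rewrite valuation0 sub0r ge_min => /orP [/(le_trans (lex1 _))|].
Qed.

Lemma valuation_subC (x y : G) : v (x - y)%R = v (y - x)%R.
Proof. by rewrite -valuationN opprB. Qed.

Lemma valuation_eq_of_lt_sub {x y : G} : v x < v (x - y)%R -> v y = v x.
Proof.
move=> lt_x_xy; apply/le_anti/andP; split.
- have := valuation_min_le_sub (x - y)%R (- y)%R.
  rewrite (opprK y) (subrK y x) valuationN ge_min => /orP [le_xy_x|//].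
  by have := lt_le_trans lt_x_xy le_xy_x; rewrite ltxx.
- have := valuation_min_le_sub x (x - y)%R.
  rewrite opprB addrCA subrr addr0 ge_min => /orP [//|le_xy_y].
  exact: ltW (lt_le_trans lt_x_xy le_xy_y).
Qed.

End Valuation.

Lemma additive_sub {G G' : zmodType} {f : G -> G'} :
  (forall a b : G, f (a + b)%R = (f a + f b)%R) ->
  forall a b : G, f (a - b)%R = (f a - f b)%R.
Proof. by move=> fD a b; rewrite -[in RHS](subrK b a) (fD (a - b)%R) addrK. Qed.

Section ImmediateIH.
Variables (G G' : zmodType) (d d' : Order.disp_t).
Variables (Gam : tOrderType d) (Gam' : tOrderType d').
Variables (v : G -> Gam) (v' : G' -> Gam') (f : G -> G').
Hypotheses (hv : valuation v) (hv' : valuation v') (f0 : f 0%R = 0%R).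

Lemma immediate_IH_property : immediate v v' f -> IH_property v v' f.
Proof.
move=> imm a' a'_neq0.
have [|a [lt_a' ball_a]] := imm a' 0%R; first by rewrite f0.
rewrite f0 sub0r (valuationN hv') (valuation_subC hv') in lt_a'.
exists a; split=> // b le_ab.
have := ball_a b; rewrite /vball f0 !sub0r !(valuationN hv) !(valuationN hv') => /(_ le_ab).
by rewrite (valuation_eq_of_lt_sub hv' lt_a').
Qed.

Lemma IH_property_immediate :
  (forall a b : G, f (a + b)%R = (f a + f b)%R) ->
  IH_property v v' f -> immediate v v' f.
Proof.
move=> fD IH z' y z'_neq_fy.
have [|a [lt_a' IH2_a]] := IH (z' - f y)%R.
  by move/eqP; rewrite subr_eq0 => /eqP.
have fyaE : (f (y + a) - z' = - (z' - f y - f a))%R.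
  by rewrite fD !opprB addrCA addrA.
exists (y + a)%R; split.
  by rewrite fyaE (valuationN hv') (valuation_subC hv' (f y)).
move=> w; rewrite /vball opprD addrA subrr sub0r (valuationN hv) (valuation_subC hv y).
move=> /IH2_a le_fa_fwy.
rewrite (valuation_subC hv' (f y) z') -(valuation_eq_of_lt_sub hv' lt_a').
by rewrite (valuation_subC hv' (f y) (f w)) -(additive_sub fD).
Qed.

End ImmediateIH.

Theorem proposition11 (G G' : zmodType) (d d' : Order.disp_t)
  (Gam : tOrderType d) (Gam' : tOrderType d')
  (v : G -> Gam) (v' : G' -> Gam') (f : G -> G') :
  valuation v -> valuation v' -> f 0%R = 0%R ->
  (immediate v v' f -> IH_property v v' f) /\
  ((forall a b : G, f (a + b)%R = (f a + f b)%R) ->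
     IH_property v v' f -> immediate v v' f).
Proof.
move=> hv hv' f0; split.
- exact: immediate_IH_property.
- exact: IH_property_immediate.
Qed.
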